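(* Let $x_1<x_2$, $u_0\in C^4([x_1,x_2])$ and $u_1\in C^3([x_1,x_2])$. Consider the Tricomi equation $y\,u_{xx}+u_{yy}=0$ with the data $u(x,0)=u_0(x)$, $u_y(x,0)=u_1(x)$ for $x\in[x_1,x_2]$. Then there exists a constant $\bar\delta$ with $0<\bar\delta\le\sqrt[3]{\frac{9(x_2-x_1)^2}{16}}$ such that this boundary problem has a classical solution in the region \[ \overline D_{\bar\delta}=\Big\{(x,y):\ -\bar\delta\le y\le 0,\ x_1+\tfrac23(-y)^{3/2}\le x\le x_2-\tfrac23(-y)^{3/2}\Big\}. \] *)

From Stdlib Require Import Reals.
Open Scope R_scope.

Definition derive_within (D : R -> Prop) (f f' : R -> R) : Prop :=
  forall x, D x ->
    forall eps, 0 < eps -> exists del, 0 < del /\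
      forall y, D y -> y <> x -> Rabs (y - x) < del ->
        Rabs ((f y - f x) / (y - x) - f' x) < eps.

Definition continuous_within (D : R -> Prop) (f : R -> R) : Prop :=
  forall x, D x ->
    forall eps, 0 < eps -> exists del, 0 < del /\
      forall y, D y -> Rabs (y - x) < del -> Rabs (f y - f x) < eps.

Definition Ck_on (k : nat) (D : R -> Prop) (f : R -> R) : Prop :=
  exists F : nat -> R -> R,
    F 0%nat = f /\
    (forall i, (i < k)%nat -> derive_within D (F i) (F (S i))) /\
    continuous_within D (F k).

Definition closed_interval (a b : R) : R -> Prop := fun x => a <= x <= b.

Definition continuous2_within (D : R -> R -> Prop) (f : R -> R -> R) : Prop :=
  forall x y, D x y ->
    forall eps, 0 < eps -> exists del, 0 < del /\
      forall x' y', D x' y' -> Rabs (x' - x) < del -> Rabs (y' - y) < del ->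
        Rabs (f x' y' - f x y) < eps.

(* (-y)^{3/2} for y <= 0, written as (-y) * sqrt(-y). *)
Definition pow32 (t : R) : R := t * sqrt t.

Definition region (x1 x2 delta : R) : R -> R -> Prop := fun x y =>
  - delta <= y <= 0 /\
  x1 + 2/3 * pow32 (- y) <= x <= x2 - 2/3 * pow32 (- y).

Definition region_int (x1 x2 delta : R) : R -> R -> Prop := fun x y =>
  - delta < y < 0 /\
  x1 + 2/3 * pow32 (- y) < x < x2 - 2/3 * pow32 (- y).

Definition classical_solution (x1 x2 delta : R) (u0 u1 : R -> R)
    (u : R -> R -> R) : Prop :=
  exists ux uy uxx uxy uyy : R -> R -> R,
    (forall x y, region_int x1 x2 delta x y ->
       derivable_pt_lim (fun t => u t y) x (ux x y) /\
       derivable_pt_lim (fun t => u x t) y (uy x y) /\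
       derivable_pt_lim (fun t => ux t y) x (uxx x y) /\
       derivable_pt_lim (fun t => ux x t) y (uxy x y) /\
       derivable_pt_lim (fun t => uy t y) x (uxy x y) /\
       derivable_pt_lim (fun t => uy x t) y (uyy x y)) /\
    continuous2_within (region x1 x2 delta) u /\
    continuous2_within (region x1 x2 delta) ux /\
    continuous2_within (region x1 x2 delta) uy /\
    continuous2_within (region x1 x2 delta) uxx /\
    continuous2_within (region x1 x2 delta) uxy /\
    continuous2_within (region x1 x2 delta) uyy /\
    (forall x y, region x1 x2 delta x y -> y * uxx x y + uyy x y = 0) /\
    (forall x, x1 <= x <= x2 -> u x 0 = u0 x /\ uy x 0 = u1 x).

(* With tau = (2/3) (-y)^(3/2), the solution is given by the Euler-Poisson-Darboux
   type formula
     u(x, y) = c1 \int_{-1}^{1} f(x + tau s) (1 - s^2)^(-5/6) ds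
             + c2 y \int_{-1}^{1} g(x + tau s) (1 - s^2)^(-1/6) ds,
   where f and g are C^2 extensions of u0 and u1 to the whole line (only C^2
   regularity of the data is used) and c1, c2 normalise the weights, so that
   u(x, 0) = f(x) and u_y(x, 0) = g(x).  After the substitution s = phi(w) both
   weights are continuous, the integrals can be differentiated under the integral
   sign, and y u_xx + u_yy = 0 reduces to one integration by parts in w.  The
   formula is defined in the whole lower half-plane, so every delta works; we take
   the largest one allowed, for which the region is the characteristic triangle
   over [x1, x2]. *)

From Stdlib Require Import Reals Lra Lia.
From Coquelicot Require Import Coquelicot.
Open Scope R_scope.

Lemma is_derive_val (f : R -> R) (x l l' : R) : is_derive f x l -> l = l' -> is_derive f x l'.
Proof. now intros H <-. Qed.

Lemma continuity_of_is_derive f f' : (forall z, is_derive f z (f' z)) -> continuity f.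
Proof. intros Hf z; apply derivable_continuous_pt, ex_derive_Reals_0; eexists; apply Hf. Qed.

Lemma derive_within_continuous_within D f f' :
  derive_within D f f' -> continuous_within D f.
Proof.
  intros Hf x Dx eps Heps.
  destruct (Hf x Dx 1 Rlt_0_1) as [del [Hdel Hq]].
  remember (Rabs (f' x) + 1) as K eqn:EK.
  assert (HK : 0 < K) by (pose proof (Rabs_pos (f' x)); lra).
  exists (Rmin del (eps / K)); split.
  { apply Rmin_pos; [lra | apply Rdiv_lt_0_compat; lra]. }
  intros y Dy Hy.
  destruct (Req_dec y x) as [->|Hyx]; [rewrite Rminus_diag, Rabs_R0; lra|].
  pose proof (Rmin_l del (eps / K)); pose proof (Rmin_r del (eps / K)).
  specialize (Hq y Dy Hyx ltac:(lra)).
  set (q := (f y - f x) / (y - x)) in Hq.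
  assert (Hfq : f y - f x = q * (y - x)) by (unfold q; field; lra).
  assert (Hqle : Rabs q <= K).
  { replace q with ((q - f' x) + f' x) by ring.
    pose proof (Rabs_triang (q - f' x) (f' x)); lra. }
  assert (Hyx' : Rabs (y - x) * K < eps).
  { replace eps with (eps / K * K) by (field; lra).
    apply Rmult_lt_compat_r; lra. }
  rewrite Hfq, Rabs_mult.
  pose proof (Rabs_pos (y - x)); nra.
Qed.

Definition clamp (a b x : R) : R := Rmax a (Rmin b x).

Lemma clamp_in a b x : a <= b -> a <= clamp a b x <= b.
Proof. intros; unfold clamp, Rmax, Rmin; repeat destruct Rle_dec; lra. Qed.

Lemma clamp_id a b x : a <= x <= b -> clamp a b x = x.
Proof. intros; unfold clamp, Rmax, Rmin; repeat destruct Rle_dec; lra. Qed.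

Lemma clamp_lipschitz a b x y : Rabs (clamp a b y - clamp a b x) <= Rabs (y - x).
Proof.
  unfold clamp, Rmax, Rmin; repeat destruct Rle_dec;
  unfold Rabs; repeat destruct Rcase_abs; lra.
Qed.

Lemma continuity_clamp_comp a b h : a <= b ->
  continuous_within (closed_interval a b) h -> continuity (fun x => h (clamp a b x)).
Proof.
  intros Hab Hh z eps Heps.
  destruct (Hh (clamp a b z) (clamp_in a b z Hab) eps Heps) as [del [Hdel Hy]].
  exists del; split; [exact Hdel|]; intros y [_ Hyz].
  apply Hy; [apply clamp_in; exact Hab|].
  eapply Rle_lt_trans; [apply clamp_lipschitz | exact Hyz].
Qed.

Lemma is_derive_clamp_comp_interior a b h h' x :
  derive_within (closed_interval a b) h h' -> a < x < b ->
  is_derive (fun t => h (clamp a b t)) x (h' x).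
Proof.
  intros Hh Hx.
  apply is_derive_ext_loc with (f := h).
  { assert (Hr : 0 < Rmin (x - a) (b - x)) by (apply Rmin_pos; lra).
    exists (mkposreal _ Hr); intros t Ht; rewrite clamp_id; [reflexivity|].
    change (Rabs (t - x) < Rmin (x - a) (b - x)) in Ht.
    pose proof (Rmin_l (x - a) (b - x)); pose proof (Rmin_r (x - a) (b - x)).
    apply Rabs_def2 in Ht; lra. }
  apply is_derive_Reals; intros eps Heps.
  destruct (Hh x ltac:(unfold closed_interval; lra) eps Heps) as [del [Hdel Hy]].
  assert (Hr : 0 < Rmin del (Rmin (x - a) (b - x))) by (repeat apply Rmin_pos; lra).
  exists (mkposreal _ Hr); simpl; intros t Ht0 Ht.
  pose proof (Rmin_l del (Rmin (x - a) (b - x))); pose proof (Rmin_r del (Rmin (x - a) (b - x))).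
  pose proof (Rmin_l (x - a) (b - x)); pose proof (Rmin_r (x - a) (b - x)).
  pose proof (Rabs_def2 t _ Ht).
  specialize (Hy (x + t) ltac:(unfold closed_interval; lra) ltac:(lra)).
  replace (x + t - x) with t in Hy by ring.
  apply Hy; lra.
Qed.

Lemma derive_within_of_is_derive D f f' :
  (forall x, is_derive f x (f' x)) -> derive_within D f f'.
Proof.
  intros Hf x _ eps Heps.
  destruct (proj1 (is_derive_Reals f x (f' x)) (Hf x) eps Heps) as [del Hdel].
  exists del; split; [apply cond_pos|]; intros y _ Hyx Hy.
  specialize (Hdel (y - x) ltac:(lra) Hy).
  replace (x + (y - x)) with y in Hdel by ring; exact Hdel.
Qed.

Lemma derive_within_minus D f f' g g' :
  derive_within D f f' -> derive_within D g g' ->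
  derive_within D (fun x => f x - g x) (fun x => f' x - g' x).
Proof.
  intros Hf Hg x Dx eps Heps.
  destruct (Hf x Dx (eps / 2)) as [d1 [Hd1 H1]]; [lra|].
  destruct (Hg x Dx (eps / 2)) as [d2 [Hd2 H2]]; [lra|].
  exists (Rmin d1 d2); split; [apply Rmin_pos; lra|]; intros y Dy Hyx Hy.
  pose proof (Rmin_l d1 d2); pose proof (Rmin_r d1 d2).
  specialize (H1 y Dy Hyx ltac:(lra)); specialize (H2 y Dy Hyx ltac:(lra)).
  replace ((f y - g y - (f x - g x)) / (y - x) - (f' x - g' x)) with
    (((f y - f x) / (y - x) - f' x) - ((g y - g x) / (y - x) - g' x))
    by (field; lra).
  eapply Rle_lt_trans; [apply Rabs_triang|]; rewrite Rabs_Ropp; lra.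
Qed.

Lemma derive_within_zero_const a b q q' : a < b ->
  derive_within (closed_interval a b) q q' -> (forall x, a <= x <= b -> q' x = 0) ->
  forall x, a <= x <= b -> q x = q a.
Proof.
  intros Hab Hq Hq'.
  set (qc := fun x => q (clamp a b x)).
  assert (Hc : continuity qc).
  { apply continuity_clamp_comp; [lra|]; eapply derive_within_continuous_within; exact Hq. }
  assert (Hd : forall x, a < x < b -> is_derive qc x 0).
  { intros x Hx; rewrite <- (Hq' x) by lra.
    exact (is_derive_clamp_comp_interior a b q _ x Hq Hx). }
  assert (H0 : continuity (fun _ : R => 0)) by (apply continuity_const; intros ? ?; reflexivity).
  destruct (fn_eq_Derive_eq qc (fun _ => 0) a b (Hc a) (Hc b) (H0 a) (H0 b)) as [C HC].
  - intros x Hx; eexists; exact (Hd x Hx).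
  - intros x _; apply ex_derive_const.
  - intros x Hx; rewrite Derive_const; exact (is_derive_unique _ _ _ (Hd x Hx)).
  - intros x Hx.
    pose proof (HC x Hx) as Ex; pose proof (HC a ltac:(lra)) as Ea.
    unfold qc in Ex, Ea; rewrite clamp_id in Ex, Ea by lra; lra.
Qed.

Lemma ex_RInt_of_continuity (e : R -> R) a x : continuity e -> ex_RInt e a x.
Proof.
  intros He; apply (@ex_RInt_continuous R_CompleteNormedModule); intros z _.
  apply continuity_pt_filterlim, He.
Qed.

Lemma is_derive_RInt_of_continuity (e : R -> R) a z :
  continuity e -> is_derive (fun x => RInt e a x) z (e z).
Proof.
  intros He; apply (is_derive_RInt e (fun x => RInt e a x) a z).
  - apply filter_forall; intros y; apply (@RInt_correct R_CompleteNormedModule).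
    apply ex_RInt_of_continuity, He.
  - apply continuity_pt_filterlim, He.
Qed.

Lemma antiderivative_extension a b h h' e : a < b ->
  derive_within (closed_interval a b) h h' -> continuity e ->
  (forall x, a <= x <= b -> e x = h' x) ->
  (forall z, is_derive (fun x => h a + RInt e a x) z (e z)) /\
  (forall x, a <= x <= b -> h a + RInt e a x = h x).
Proof.
  intros Hab Hh He Heh.
  assert (Hd : forall z, is_derive (fun x => h a + RInt e a x) z (e z)).
  { intros z; apply (is_derive_val _ _ (0 + e z)); [|ring].
    apply (is_derive_plus (fun _ => h a)); [apply (is_derive_const (V := R_NormedModule))|].
    apply is_derive_RInt_of_continuity, He. }
  split; [exact Hd|]; intros x Hx.
  assert (Hq := derive_within_minus _ _ _ _ _ Hh (derive_within_of_is_derive _ _ _ Hd)).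
  pose proof (derive_within_zero_const a b _ _ Hab Hq
                ltac:(intros y Hy; cbv beta; rewrite Heh by exact Hy; ring) x Hx) as E.
  cbv beta in E; rewrite RInt_point in E; unfold zero in E; simpl in E; lra.
Qed.

Definition C2 (f f1 f2 : R -> R) : Prop :=
  (forall z, is_derive f z (f1 z)) /\ (forall z, is_derive f1 z (f2 z)) /\ continuity f2.

(* The second derivative is extended by constants outside [a, b] and integrated twice. *)
Lemma Ck_on_C2_extension k a b u : (2 <= k)%nat -> a < b ->
  Ck_on k (closed_interval a b) u ->
  exists f f1 f2, C2 f f1 f2 /\ forall x, a <= x <= b -> f x = u x.
Proof.
  intros Hk Hab [F [<- [HF HFk]]].
  assert (HF2 : continuous_within (closed_interval a b) (F 2%nat)).
  { destruct (Nat.eq_dec k 2) as [->|Hk2]; [exact HFk|].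
    apply derive_within_continuous_within with (F 3%nat), HF; lia. }
  set (e2 := fun x => F 2%nat (clamp a b x)).
  assert (He2 : continuity e2) by (apply continuity_clamp_comp; [lra | exact HF2]).
  destruct (antiderivative_extension a b (F 1%nat) (F 2%nat) e2 Hab
              ltac:(apply HF; lia) He2) as [D1 E1].
  { intros x Hx; unfold e2; rewrite clamp_id; auto. }
  set (e1 := fun x => F 1%nat a + RInt e2 a x) in *.
  assert (He1 : continuity e1) by exact (continuity_of_is_derive _ _ D1).
  destruct (antiderivative_extension a b (F 0%nat) (F 1%nat) e1 Hab
              ltac:(apply HF; lia) He1 E1) as [D0 E0].
  exists (fun x => F 0%nat a + RInt e1 a x), e1, e2.
  exact (conj (conj D0 (conj D1 He2)) E0).
Qed.

Definition nu (w : R) : R := 1 - w * w.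
Definition nu_poly (w : R) : R := 1 + nu w + nu w ^ 2 + nu w ^ 3 + nu w ^ 4 + nu w ^ 5.
Definition sqrt_nu_poly (w : R) : R := sqrt (nu_poly w).

(* The substitution s = phi w maps [-1, 1] onto itself with 1 - s^2 = nu^6 and
   ds = 6 nu^5 / sqrt_nu_poly dw, so that m1 dw = (1 - s^2)^(-5/6) ds and
   m2 dw = (1 - s^2)^(-1/6) ds: the singular weights of the representation
   formula become continuous. *)
Definition phi (w : R) : R := w * sqrt_nu_poly w.
Definition m1 (w : R) : R := 6 / sqrt_nu_poly w.
Definition m2 (w : R) : R := 6 * nu w ^ 4 / sqrt_nu_poly w.

Lemma nu_bounds w : -1 <= w <= 1 -> 0 <= nu w <= 1.
Proof. intros; unfold nu; nra. Qed.

Lemma nu_poly_ge1 w : -1 <= w <= 1 -> 1 <= nu_poly w.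
Proof.
  intros Hw; destruct (nu_bounds w Hw); unfold nu_poly.
  assert (0 <= nu w ^ 2) by (apply pow_le; lra).
  assert (0 <= nu w ^ 3) by (apply pow_le; lra).
  assert (0 <= nu w ^ 4) by (apply pow_le; lra).
  assert (0 <= nu w ^ 5) by (apply pow_le; lra).
  lra.
Qed.

Lemma sqrt_nu_poly_pos w : -1 <= w <= 1 -> 0 < sqrt_nu_poly w.
Proof. intros Hw; apply sqrt_lt_R0; pose proof (nu_poly_ge1 w Hw); lra. Qed.

Lemma sqrt_nu_poly_sqr w : -1 <= w <= 1 -> sqrt_nu_poly w * sqrt_nu_poly w = nu_poly w.
Proof. intros Hw; apply sqrt_sqrt; pose proof (nu_poly_ge1 w Hw); lra. Qed.

Lemma phi_sqr w : -1 <= w <= 1 -> phi w * phi w = 1 - nu w ^ 6.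
Proof.
  intros Hw; unfold phi.
  replace (w * sqrt_nu_poly w * (w * sqrt_nu_poly w))
    with (w * w * (sqrt_nu_poly w * sqrt_nu_poly w)) by ring.
  rewrite sqrt_nu_poly_sqr by exact Hw; unfold nu_poly, nu; ring.
Qed.

Lemma Rabs_phi_le w : -1 <= w <= 1 -> Rabs (phi w) <= 1.
Proof.
  intros Hw; pose proof (phi_sqr w Hw); destruct (nu_bounds w Hw).
  assert (0 <= nu w ^ 6) by (apply pow_le; lra).
  apply Rabs_le; nra.
Qed.

Lemma is_derive_phi w : -1 <= w <= 1 ->
  is_derive phi w (6 * nu w ^ 5 / sqrt_nu_poly w).
Proof.
  intros Hw; pose proof (nu_poly_ge1 w Hw); pose proof (sqrt_nu_poly_pos w Hw).
  pose proof (sqrt_nu_poly_sqr w Hw) as Hsq.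
  unfold phi, sqrt_nu_poly in *; unfold nu_poly, nu in *; auto_derive.
  - simpl in H |- *; lra.
  - set (s := sqrt _) in *.
    apply (Rmult_eq_reg_r s); [|lra].
    field_simplify; [|lra..].
    replace (s ^ 2) with (s * s) by ring; rewrite Hsq; field.
Qed.

Definition weight_continuous (k : R -> R) : Prop :=
  forall w, -1 <= w <= 1 -> continuity_pt k w.

Lemma weight_continuous_mult k l :
  weight_continuous k -> weight_continuous l -> weight_continuous (fun w => k w * l w).
Proof. intros Hk Hl w Hw; apply continuity_pt_mult; auto. Qed.

Lemma weight_continuous_sqrt_nu_poly : weight_continuous sqrt_nu_poly.
Proof.
  intros w Hw; apply (continuity_pt_comp nu_poly sqrt).
  - unfold nu_poly, nu; reg.
  - apply continuity_pt_sqrt; pose proof (nu_poly_ge1 w Hw); lra.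
Qed.

Lemma weight_continuous_phi : weight_continuous phi.
Proof.
  apply (weight_continuous_mult (fun w => w)); [|exact weight_continuous_sqrt_nu_poly].
  intros w _; apply continuity_pt_id.
Qed.

Lemma weight_continuous_div k : weight_continuous k ->
  weight_continuous (fun w => k w / sqrt_nu_poly w).
Proof.
  intros Hk w Hw; apply continuity_pt_div; auto.
  - apply weight_continuous_sqrt_nu_poly, Hw.
  - pose proof (sqrt_nu_poly_pos w Hw); lra.
Qed.

Lemma weight_continuous_m1 : weight_continuous m1.
Proof. apply (weight_continuous_div (fun _ => 6)); intros w _; reg. Qed.

Lemma weight_continuous_m2 : weight_continuous m2.
Proof. apply (weight_continuous_div (fun w => 6 * nu w ^ 4)); intros w _; unfold nu; reg. Qed.

Lemma ex_RInt_weight k : weight_continuous k -> ex_RInt k (-1) 1.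
Proof.
  intros Hk; apply (@ex_RInt_continuous R_CompleteNormedModule).
  rewrite Rmin_left, Rmax_right by lra; intros z Hz.
  apply continuity_pt_filterlim, Hk, Hz.
Qed.

Lemma RInt_weight_pos k : weight_continuous k ->
  (forall w, -1 < w < 1 -> 0 < k w) -> 0 < RInt k (-1) 1.
Proof.
  intros Hk Hpos; apply RInt_gt_0; [lra | exact Hpos|].
  intros w Hw; apply continuity_pt_filterlim, Hk, Hw.
Qed.

Lemma RInt_m1_pos : 0 < RInt m1 (-1) 1.
Proof.
  apply RInt_weight_pos; [exact weight_continuous_m1|]; intros w Hw.
  pose proof (sqrt_nu_poly_pos w ltac:(lra)); unfold m1; apply Rdiv_lt_0_compat; lra.
Qed.

Lemma RInt_m2_pos : 0 < RInt m2 (-1) 1.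
Proof.
  apply RInt_weight_pos; [exact weight_continuous_m2|]; intros w Hw.
  pose proof (sqrt_nu_poly_pos w ltac:(lra)).
  assert (0 < nu w ^ 4) by (apply pow_lt; unfold nu; nra).
  unfold m2; apply Rdiv_lt_0_compat; lra.
Qed.

Lemma RInt_minus_R (f g : R -> R) a b : ex_RInt f a b -> ex_RInt g a b ->
  RInt (fun x => f x - g x) a b = RInt f a b - RInt g a b.
Proof. apply (@RInt_minus R_CompleteNormedModule). Qed.

Lemma RInt_scal_R (f : R -> R) a b c : ex_RInt f a b ->
  RInt (fun x => c * f x) a b = c * RInt f a b.
Proof. apply (@RInt_scal R_CompleteNormedModule). Qed.

Lemma RInt_plus_R (f g : R -> R) a b : ex_RInt f a b -> ex_RInt g a b ->
  RInt (fun x => f x + g x) a b = RInt f a b + RInt g a b.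
Proof. apply (@RInt_plus R_CompleteNormedModule). Qed.

Lemma is_derive_RInt_pm1_param (F dF : R -> R -> R) x :
  (forall u t, is_derive (fun z => F z t) u (dF u t)) ->
  (forall t, -1 <= t <= 1 -> continuity_2d_pt dF x t) ->
  (forall u, ex_RInt (F u) (-1) 1) ->
  is_derive (fun u => RInt (F u) (-1) 1) x (RInt (dF x) (-1) 1).
Proof.
  intros HdF HcF HF.
  assert (EdF : forall u t, Derive (fun z => F z t) u = dF u t)
    by (intros; apply is_derive_unique, HdF).
  rewrite (RInt_ext (dF x) (fun t => Derive (fun u => F u t) x)) by (intros; auto).
  apply (is_derive_RInt_param F (-1) 1 x).
  - apply filter_forall; intros u t _; eexists; apply HdF.
  - rewrite Rmin_left, Rmax_right by lra; intros t Ht.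
    apply continuity_2d_pt_ext with (f := dF); [intros; auto | apply HcF, Ht].
  - apply filter_forall, HF.
Qed.

Lemma continuity_2d_pt_snd (h : R -> R) x t :
  continuity_pt h t -> continuity_2d_pt (fun _ v => h v) x t.
Proof.
  intros Hh; apply (continuity_1d_2d_pt_comp h (fun _ v => v)); [exact Hh | apply continuity_2d_pt_id2].
Qed.

Definition wmean (G k : R -> R) (p q : R) : R :=
  RInt (fun w => G (p + q * phi w) * k w) (-1) 1.

Lemma weight_continuous_integrand G k p q : continuity G -> weight_continuous k ->
  weight_continuous (fun w => G (p + q * phi w) * k w).
Proof.
  intros HG Hk; apply weight_continuous_mult; [|exact Hk]; intros w Hw.
  apply (continuity_pt_comp (fun w => p + q * phi w) G); [|apply HG].
  apply continuity_pt_plus; [apply continuity_pt_const; intros ? ?; reflexivity|].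
  apply (weight_continuous_mult (fun _ => q) phi); [intros ? _; reg | exact weight_continuous_phi | exact Hw].
Qed.

Lemma Rabs_affine_phi_le p q w : -1 <= w <= 1 -> Rabs (p + q * phi w) <= Rabs p + Rabs q.
Proof.
  intros Hw; eapply Rle_trans; [apply Rabs_triang|]; rewrite Rabs_mult.
  pose proof (Rabs_phi_le w Hw); pose proof (Rabs_pos q); nra.
Qed.

Lemma wmean_continuous G k p0 q0 : continuity G -> weight_continuous k ->
  forall eps, 0 < eps -> exists del, 0 < del /\
    forall p q, Rabs (p - p0) < del -> Rabs (q - q0) < del ->
      Rabs (wmean G k p q - wmean G k p0 q0) < eps.
Proof.
  intros HG Hk eps Heps.
  destruct (continuity_ab_maj (fun w => Rabs (k w)) (-1) 1) as [wM [HM _]]; [lra| |].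
  { intros w Hw; apply (continuity_pt_comp k Rabs); [apply Hk, Hw | apply Rcontinuity_abs]. }
  remember (Rabs (k wM) + 1) as K eqn:EK.
  assert (HK : 0 < K) by (pose proof (Rabs_pos (k wM)); lra).
  remember (Rabs p0 + Rabs q0 + 2) as r eqn:Er.
  assert (He : 0 < eps / (4 * K)) by (apply Rdiv_lt_0_compat; lra).
  destruct (Heine G (fun c => -r <= c <= r) (compact_P3 (-r) r) (fun x _ => HG x)
              (mkposreal _ He)) as [[d Hd] HGd]; simpl in HGd.
  exists (Rmin 1 (d / 2)); split; [apply Rmin_pos; lra|]; intros p q Hp Hq.
  pose proof (Rmin_l 1 (d / 2)); pose proof (Rmin_r 1 (d / 2)).
  pose proof (Rabs_triang_inv p p0); pose proof (Rabs_triang_inv q q0).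
  unfold wmean; rewrite <- RInt_minus_R by (apply ex_RInt_weight, weight_continuous_integrand; auto).
  eapply Rle_lt_trans.
  - apply abs_RInt_le_const with (M := eps / (4 * K) * K); [lra| |].
    + apply ex_RInt_weight; intros w Hw; apply continuity_pt_minus;
        apply weight_continuous_integrand; auto.
    + intros w Hw; rewrite <- Rmult_minus_distr_r, Rabs_mult.
      pose proof (HM w Hw); cbv beta in *.
      apply Rmult_le_compat; try apply Rabs_pos; [|lra]; apply Rlt_le, HGd.
      * pose proof (Rabs_affine_phi_le p q w Hw); apply Rabs_le_between; lra.
      * pose proof (Rabs_affine_phi_le p0 q0 w Hw); apply Rabs_le_between; lra.
      * replace (p + q * phi w - (p0 + q0 * phi w)) with ((p - p0) + (q - q0) * phi w) by ring.
        pose proof (Rabs_affine_phi_le (p - p0) (q - q0) w Hw); lra.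
  - replace ((1 - -1) * (eps / (4 * K) * K)) with (eps / 2) by (field; lra); lra.
Qed.

Lemma wmean_0 G k p : weight_continuous k -> wmean G k p 0 = G p * RInt k (-1) 1.
Proof.
  intros Hk; unfold wmean; rewrite <- RInt_scal_R by (apply ex_RInt_weight, Hk).
  apply RInt_ext; intros w _; rewrite Rmult_0_l, Rplus_0_r; reflexivity.
Qed.

(* Integration by parts of d/dw [G1 (p + q phi w) H w] over [-1, 1]. *)
Lemma wmean_by_parts (G1 G2 m H H' : R -> R) (beta p q : R) :
  (forall z, is_derive G1 z (G2 z)) -> continuity G2 -> weight_continuous m ->
  (forall w, -1 <= w <= 1 -> is_derive H w (H' w)) ->
  (forall w, -1 <= w <= 1 ->
     H w * (6 * nu w ^ 5 / sqrt_nu_poly w) = 3/2 * (phi w * phi w - 1) * m w) ->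
  (forall w, -1 <= w <= 1 -> H' w = beta * (phi w * m w)) ->
  H 1 = 0 -> H (-1) = 0 ->
  q * (3/2) * (wmean G2 (fun w => phi w * (phi w * m w)) p q - wmean G2 m p q)
    + beta * wmean G1 (fun w => phi w * m w) p q = 0.
Proof.
  intros HG1 HG2 Hm HH HHphi HH' H1 Hm1.
  assert (HG1c := continuity_of_is_derive _ _ HG1).
  set (A := fun w => G2 (p + q * phi w) * (phi w * (phi w * m w))).
  set (B := fun w => G2 (p + q * phi w) * m w).
  set (C := fun w => G1 (p + q * phi w) * (phi w * m w)).
  assert (Hphim := weight_continuous_mult _ _ weight_continuous_phi Hm).
  assert (kA : weight_continuous A)
    by (apply weight_continuous_integrand, weight_continuous_mult; auto using weight_continuous_phi).
  assert (kB : weight_continuous B) by (apply weight_continuous_integrand; auto).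
  assert (kC : weight_continuous C) by (apply weight_continuous_integrand; auto).
  set (dGH := fun w => q * (3/2) * (A w - B w) + beta * C w).
  assert (kdGH : weight_continuous dGH).
  { intros w Hw; unfold dGH; reg; auto. }
  assert (HdGH : is_RInt dGH (-1) 1
                   (minus (G1 (p + q * phi 1) * H 1) (G1 (p + q * phi (-1)) * H (-1)))).
  { apply (is_RInt_derive (fun w => G1 (p + q * phi w) * H w));
      rewrite Rmin_left, Rmax_right by lra; intros w Hw.
    - set (dphi := 6 * nu w ^ 5 / sqrt_nu_poly w).
      apply (is_derive_val _ _ (q * dphi * G2 (p + q * phi w) * H w + G1 (p + q * phi w) * H' w)).
      + apply (is_derive_mult (fun w => G1 (p + q * phi w)) H); [| apply HH, Hw | intros; apply Rmult_comm].
        apply (is_derive_comp G1 (fun w => p + q * phi w)); [apply HG1|].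
        apply (is_derive_val _ _ (0 + q * dphi)); [|ring].
        apply (is_derive_plus (fun _ => p)); [apply (is_derive_const (V := R_NormedModule))|].
        apply (is_derive_scal phi), is_derive_phi, Hw.
      + replace (q * dphi * G2 (p + q * phi w) * H w)
          with (q * G2 (p + q * phi w) * (H w * dphi)) by ring.
        unfold dphi; rewrite HHphi, HH' by exact Hw; unfold dGH, A, B, C; ring.
    - apply continuity_pt_filterlim, kdGH, Hw. }
  rewrite H1, Hm1 in HdGH; apply (@is_RInt_unique R_CompleteNormedModule) in HdGH.
  unfold dGH in HdGH.
  rewrite RInt_plus_R, !RInt_scal_R, RInt_minus_R in HdGH;
    try (apply ex_RInt_weight; intros w Hw; reg; auto).
  unfold wmean; fold A B C; rewrite HdGH; unfold minus, plus, opp; simpl; ring.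
Qed.


(* In the variable s = phi w, H is -(3/2) (1 - s^2)^(1/6) for m1 and
   -(3/2) (1 - s^2)^(5/6) for m2. *)
Lemma wmean_m1_recurrence G1 G2 p q :
  (forall z, is_derive G1 z (G2 z)) -> continuity G2 ->
  q * (3/2) * (wmean G2 (fun w => phi w * (phi w * m1 w)) p q - wmean G2 m1 p q)
    + 1/2 * wmean G1 (fun w => phi w * m1 w) p q = 0.
Proof.
  intros HG1 HG2.
  apply (wmean_by_parts G1 G2 m1 (fun w => -(3/2) * nu w) (fun w => 3 * w));
    auto using weight_continuous_m1; try (unfold nu; ring); intros w Hw;
    pose proof (sqrt_nu_poly_pos w Hw).
  - unfold nu; auto_derive; [exact I | field].
  - rewrite phi_sqr by exact Hw; unfold m1; field; lra.
  - unfold m1, phi; field; lra.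
Qed.

Lemma wmean_m2_recurrence G1 G2 p q :
  (forall z, is_derive G1 z (G2 z)) -> continuity G2 ->
  q * (3/2) * (wmean G2 (fun w => phi w * (phi w * m2 w)) p q - wmean G2 m2 p q)
    + 5/2 * wmean G1 (fun w => phi w * m2 w) p q = 0.
Proof.
  intros HG1 HG2.
  apply (wmean_by_parts G1 G2 m2 (fun w => -(3/2) * nu w ^ 5) (fun w => 15 * w * nu w ^ 4));
    auto using weight_continuous_m2; try (unfold nu; ring); intros w Hw;
    pose proof (sqrt_nu_poly_pos w Hw).
  - unfold nu; auto_derive; [exact I | field].
  - rewrite phi_sqr by exact Hw; unfold m2; field; lra.
  - unfold m2, phi; field; lra.
Qed.

Definition rt (y : R) : R := sqrt (- y).
Definition tau (y : R) : R := 2/3 * (- y) * rt y.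

Lemma rt_pos y : y < 0 -> 0 < rt y.
Proof. intros; apply sqrt_lt_R0; lra. Qed.

Lemma rt_sqr y : y < 0 -> rt y * rt y = - y.
Proof. intros; apply sqrt_sqrt; lra. Qed.

Lemma rt_0 : rt 0 = 0.
Proof. unfold rt; rewrite Ropp_0; exact sqrt_0. Qed.

Lemma tau_0 : tau 0 = 0.
Proof. unfold tau; rewrite rt_0; ring. Qed.

Lemma continuity_rt : continuity rt.
Proof.
  intros y; apply (continuity_pt_comp Ropp sqrt); [reg|].
  apply continuity_pt_filterlim, continuous_sqrt.
Qed.

Lemma continuity_tau : continuity tau.
Proof. intros y; unfold tau; apply continuity_pt_mult; [reg | apply continuity_rt]. Qed.

Lemma is_derive_rt y : y < 0 -> is_derive rt y (- / (2 * rt y)).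
Proof. intros Hy; unfold rt; auto_derive; [lra | ring]. Qed.

Lemma is_derive_tau y : y < 0 -> is_derive tau y (- rt y).
Proof.
  intros Hy; pose proof (rt_pos y Hy); pose proof (rt_sqr y Hy).
  unfold tau; apply (is_derive_val _ _ (2/3 * (-1) * rt y + 2/3 * (- y) * (- / (2 * rt y)))).
  - apply (is_derive_mult (fun t => 2/3 * (- t)) rt); [auto_derive; [exact I | ring] | apply is_derive_rt, Hy | intros; apply Rmult_comm].
  - replace (- y) with (rt y * rt y) by lra; field; lra.
Qed.

Definition wmean_tau (G k : R -> R) (x y : R) : R := wmean G k x (tau y).

Lemma continuity_2d_wmean_tau G k x y : continuity G -> weight_continuous k ->
  continuity_2d_pt (wmean_tau G k) x y.
Proof.
  intros HG Hk [eps Heps].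
  destruct (wmean_continuous G k x (tau y) HG Hk eps Heps) as [d [Hd Hwm]].
  destruct (continuity_tau y d Hd) as [d' [Hd' Htau]].
  assert (Hdd : 0 < Rmin d d') by (apply Rmin_pos; lra).
  exists (mkposreal _ Hdd); simpl; intros u v Hu Hv.
  pose proof (Rmin_l d d'); pose proof (Rmin_r d d').
  apply Hwm; [lra|].
  destruct (Req_dec v y) as [->|Hvy]; [rewrite Rminus_diag, Rabs_R0; lra|].
  apply (Htau v); split; [split; [exact I | auto] | simpl; unfold R_dist; lra].
Qed.

Section WmeanDerivatives.

Variables (G G1 k : R -> R).
Hypotheses (HG : forall z, is_derive G z (G1 z)) (HG1 : continuity G1)
  (Hk : weight_continuous k).

Let HGc : continuity G := continuity_of_is_derive G G1 HG.

Lemma is_derive_wmean_p p q :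
  is_derive (fun p => wmean G k p q) p (wmean G1 k p q).
Proof.
  apply (is_derive_RInt_pm1_param (fun u w => G (u + q * phi w) * k w)
                                  (fun u w => G1 (u + q * phi w) * k w)).
  - intros u t; auto_derive; [eexists; apply HG|].
    rewrite (is_derive_unique _ _ _ (HG _)); ring.
  - intros t Ht; apply continuity_2d_pt_mult; [|apply continuity_2d_pt_snd, Hk, Ht].
    apply (continuity_1d_2d_pt_comp G1 (fun u v => u + q * phi v)); [apply HG1|].
    apply continuity_2d_pt_plus; [apply continuity_2d_pt_id1|].
    apply continuity_2d_pt_mult; [apply continuity_2d_pt_const|].
    apply continuity_2d_pt_snd, weight_continuous_phi, Ht.
  - intros u; apply ex_RInt_weight, weight_continuous_integrand; auto.
Qed.

Lemma is_derive_wmean_q p q :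
  is_derive (fun q => wmean G k p q) q (wmean G1 (fun w => phi w * k w) p q).
Proof.
  apply (is_derive_RInt_pm1_param (fun u w => G (p + u * phi w) * k w)
                                  (fun u w => G1 (p + u * phi w) * (phi w * k w))).
  - intros u t; auto_derive; [eexists; apply HG|].
    rewrite (is_derive_unique _ _ _ (HG _)); ring.
  - intros t Ht; apply continuity_2d_pt_mult.
    + apply (continuity_1d_2d_pt_comp G1 (fun u v => p + u * phi v)); [apply HG1|].
      apply continuity_2d_pt_plus; [apply continuity_2d_pt_const|].
      apply continuity_2d_pt_mult; [apply continuity_2d_pt_id1|].
      apply continuity_2d_pt_snd, weight_continuous_phi, Ht.
    + apply continuity_2d_pt_snd, (weight_continuous_mult phi k weight_continuous_phi Hk), Ht.
  - intros u; apply ex_RInt_weight, weight_continuous_integrand; auto.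
Qed.

Lemma is_derive_wmean_tau_x x y :
  is_derive (fun t => wmean_tau G k t y) x (wmean_tau G1 k x y).
Proof. apply is_derive_wmean_p; auto. Qed.

Lemma is_derive_wmean_tau_y x y : y < 0 ->
  is_derive (fun t => wmean_tau G k x t) y (- rt y * wmean_tau G1 (fun w => phi w * k w) x y).
Proof.
  intros Hy; unfold wmean_tau.
  apply (is_derive_comp (fun q => wmean G k x q) tau);
    [apply is_derive_wmean_q; auto | apply is_derive_tau, Hy].
Qed.

Lemma is_derive_mul_wmean_tau_y x y : y < 0 ->
  is_derive (fun t => t * wmean_tau G k x t) y
    (wmean_tau G k x y - y * rt y * wmean_tau G1 (fun w => phi w * k w) x y).
Proof.
  intros Hy.
  apply (is_derive_val _ _ (1 * wmean_tau G k x y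
           + y * (- rt y * wmean_tau G1 (fun w => phi w * k w) x y))); [|ring].
  apply (is_derive_mult (fun t => t) (fun t => wmean_tau G k x t));
    [apply (is_derive_id (K := R_AbsRing)) | apply is_derive_wmean_tau_y, Hy | intros; apply Rmult_comm].
Qed.

End WmeanDerivatives.

(* The equation y u_xx + u_yy = 0 is built in: the y-derivative of uy is - y uxx. *)
Definition tricomi_C2 (u ux uy uxx uxy : R -> R -> R) : Prop :=
  (forall x y, y < 0 ->
     is_derive (fun t => u t y) x (ux x y) /\
     is_derive (fun t => u x t) y (uy x y) /\
     is_derive (fun t => ux t y) x (uxx x y) /\
     is_derive (fun t => ux x t) y (uxy x y) /\
     is_derive (fun t => uy t y) x (uxy x y) /\
     is_derive (fun t => uy x t) y (- y * uxx x y)) /\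
  (forall x y,
     continuity_2d_pt u x y /\ continuity_2d_pt ux x y /\ continuity_2d_pt uy x y /\
     continuity_2d_pt uxx x y /\ continuity_2d_pt uxy x y).

Ltac solve_continuity_2d :=
  repeat first
    [ apply continuity_2d_pt_plus | apply continuity_2d_pt_minus
    | apply continuity_2d_pt_mult | apply continuity_2d_pt_opp
    | apply continuity_2d_pt_id2 | apply continuity_2d_pt_const
    | apply continuity_2d_pt_snd, continuity_rt
    | apply continuity_2d_wmean_tau ].

Lemma is_derive_lincomb (f g : R -> R) a b x lf lg :
  is_derive f x lf -> is_derive g x lg ->
  is_derive (fun t => a * f t + b * g t) x (a * lf + b * lg).
Proof.
  intros Hf Hg; apply (is_derive_plus (fun t => a * f t) (fun t => b * g t));
    [apply (is_derive_scal f) | apply (is_derive_scal g)]; assumption.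
Qed.

Lemma tricomi_C2_lincomb a b u ux uy uxx uxy v vx vy vxx vxy :
  tricomi_C2 u ux uy uxx uxy -> tricomi_C2 v vx vy vxx vxy ->
  tricomi_C2 (fun x y => a * u x y + b * v x y) (fun x y => a * ux x y + b * vx x y)
    (fun x y => a * uy x y + b * vy x y) (fun x y => a * uxx x y + b * vxx x y)
    (fun x y => a * uxy x y + b * vxy x y).
Proof.
  intros [Du Cu] [Dv Cv]; split.
  - intros x y Hy.
    destruct (Du x y Hy) as (D1 & D2 & D3 & D4 & D5 & D6).
    destruct (Dv x y Hy) as (E1 & E2 & E3 & E4 & E5 & E6).
    refine (conj _ (conj _ (conj _ (conj _ (conj _ _)))));
      try (apply is_derive_lincomb; assumption).
    apply (is_derive_val _ _ (a * (- y * uxx x y) + b * (- y * vxx x y))); [|ring].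
    apply is_derive_lincomb; assumption.
  - intros x y.
    destruct (Cu x y) as (C1 & C2 & C3 & C4 & C5).
    destruct (Cv x y) as (K1 & K2 & K3 & K4 & K5).
    repeat split; solve_continuity_2d; assumption.
Qed.

Section Pieces.

Variables f f1 f2 : R -> R.
Hypothesis Hf : C2 f f1 f2.

Let Hf0 : forall z, is_derive f z (f1 z) := proj1 Hf.
Let Hf1 : forall z, is_derive f1 z (f2 z) := proj1 (proj2 Hf).
Let Hf2c : continuity f2 := proj2 (proj2 Hf).
Let Hf0c : continuity f := continuity_of_is_derive _ _ Hf0.
Let Hf1c : continuity f1 := continuity_of_is_derive _ _ Hf1.

Let Hphim1 : weight_continuous (fun w => phi w * m1 w) :=
  weight_continuous_mult _ _ weight_continuous_phi weight_continuous_m1.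
Let Hphim2 : weight_continuous (fun w => phi w * m2 w) :=
  weight_continuous_mult _ _ weight_continuous_phi weight_continuous_m2.

Lemma tricomi_C2_m1 :
  tricomi_C2 (wmean_tau f m1) (wmean_tau f1 m1)
    (fun x y => - rt y * wmean_tau f1 (fun w => phi w * m1 w) x y)
    (wmean_tau f2 m1)
    (fun x y => - rt y * wmean_tau f2 (fun w => phi w * m1 w) x y).
Proof.
  split.
  - intros x y Hy.
    refine (conj _ (conj _ (conj _ (conj _ (conj _ _))))).
    + apply is_derive_wmean_tau_x; auto using weight_continuous_m1.
    + apply is_derive_wmean_tau_y; auto using weight_continuous_m1.
    + apply is_derive_wmean_tau_x; auto using weight_continuous_m1.
    + apply is_derive_wmean_tau_y; auto using weight_continuous_m1.
    + apply (is_derive_scal (fun t => wmean_tau f1 _ t y)), is_derive_wmean_tau_x; auto.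
    + apply (is_derive_val _ _
        (- - / (2 * rt y) * wmean_tau f1 (fun w => phi w * m1 w) x y
         + - rt y * (- rt y * wmean_tau f2 (fun w => phi w * (phi w * m1 w)) x y))).
      * apply (is_derive_mult (fun t => - rt t)); [| apply is_derive_wmean_tau_y; auto | intros; apply Rmult_comm].
        apply (is_derive_opp rt), is_derive_rt, Hy.
      * pose proof (wmean_m1_recurrence f1 f2 x (tau y) Hf1 Hf2c) as E.
        pose proof (rt_pos y Hy); pose proof (rt_sqr y Hy).
        unfold wmean_tau; unfold tau at 1 in E.
        set (A := wmean f2 _ x (tau y)) in *; set (B := wmean f2 m1 x (tau y)) in *.
        set (C := wmean f1 _ x (tau y)) in *; set (r := rt y) in *; clearbody A B C r.
        assert (EC : C = 2 * y * r * (A - B)) by lra.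
        rewrite EC; replace y with (- (r * r)) by lra; field; lra.
  - intros x y; repeat split; solve_continuity_2d; auto using weight_continuous_m1.
Qed.

Lemma tricomi_C2_m2 :
  tricomi_C2 (fun x y => y * wmean_tau f m2 x y) (fun x y => y * wmean_tau f1 m2 x y)
    (fun x y => wmean_tau f m2 x y - y * rt y * wmean_tau f1 (fun w => phi w * m2 w) x y)
    (fun x y => y * wmean_tau f2 m2 x y)
    (fun x y => wmean_tau f1 m2 x y - y * rt y * wmean_tau f2 (fun w => phi w * m2 w) x y).
Proof.
  split.
  - intros x y Hy.
    refine (conj _ (conj _ (conj _ (conj _ (conj _ _))))).
    + apply (is_derive_scal (fun t => wmean_tau f m2 t y)), is_derive_wmean_tau_x;
        auto using weight_continuous_m2.
    + apply is_derive_mul_wmean_tau_y; auto using weight_continuous_m2.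
    + apply (is_derive_scal (fun t => wmean_tau f1 m2 t y)), is_derive_wmean_tau_x;
        auto using weight_continuous_m2.
    + apply is_derive_mul_wmean_tau_y; auto using weight_continuous_m2.
    + apply (is_derive_minus (fun t => wmean_tau f m2 t y)).
      * apply is_derive_wmean_tau_x; auto using weight_continuous_m2.
      * apply (is_derive_scal (fun t => wmean_tau f1 _ t y)), is_derive_wmean_tau_x; auto.
    + pose proof (rt_pos y Hy); pose proof (rt_sqr y Hy).
      apply (is_derive_val _ _
        (- rt y * wmean_tau f1 (fun w => phi w * m2 w) x y
         - ((1 * rt y + y * - / (2 * rt y)) * wmean_tau f1 (fun w => phi w * m2 w) x y
            + y * rt y * (- rt y * wmean_tau f2 (fun w => phi w * (phi w * m2 w)) x y)))).
      * apply (is_derive_minus (fun t => wmean_tau f m2 x t)).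
        -- apply is_derive_wmean_tau_y; auto using weight_continuous_m2.
        -- apply (is_derive_mult (fun t => t * rt t)); [| apply is_derive_wmean_tau_y; auto | intros; apply Rmult_comm].
           apply (is_derive_mult (fun t => t) rt);
             [apply (is_derive_id (K := R_AbsRing)) | apply is_derive_rt, Hy | intros; apply Rmult_comm].
      * pose proof (wmean_m2_recurrence f1 f2 x (tau y) Hf1 Hf2c) as E.
        unfold wmean_tau; unfold tau at 1 in E.
        set (A := wmean f2 _ x (tau y)) in *; set (B := wmean f2 m2 x (tau y)) in *.
        set (C := wmean f1 _ x (tau y)) in *; set (r := rt y) in *; clearbody A B C r.
        assert (EC : C = 2/5 * y * r * (A - B)) by lra.
        rewrite EC; replace y with (- (r * r)) by lra; field; lra.
  - intros x y; repeat split; solve_continuity_2d; auto using weight_continuous_m2.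
Qed.

End Pieces.

Lemma classical_solution_of_tricomi_C2 x1 x2 delta u0 u1 u ux uy uxx uxy :
  tricomi_C2 u ux uy uxx uxy ->
  (forall x, x1 <= x <= x2 -> u x 0 = u0 x /\ uy x 0 = u1 x) ->
  classical_solution x1 x2 delta u0 u1 u.
Proof.
  intros [D C] Hdata; exists ux, uy, uxx, uxy, (fun x y => - y * uxx x y).
  assert (Hc : forall F, (forall x y, continuity_2d_pt F x y) ->
                 continuous2_within (region x1 x2 delta) F).
  { intros F HF x y _ eps Heps; destruct (HF x y (mkposreal _ Heps)) as [d Hd].
    exists d; split; [apply cond_pos | intros; apply Hd; assumption]. }
  split; [|split; [|split; [|split; [|split; [|split; [|split; [|split]]]]]]];
    try (apply Hc; intros x y; destruct (C x y) as (C1 & C2 & C3 & C4 & C5);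
         solve_continuity_2d; assumption).
  - intros x y [[_ Hy] _]; destruct (D x y Hy) as (D1 & D2 & D3 & D4 & D5 & D6).
    repeat split; apply is_derive_Reals; assumption.
  - intros x y _; ring.
  - exact Hdata.
Qed.

Theorem theoremA1 (x1 x2 : R) (u0 u1 : R -> R)
  (hx : x1 < x2)
  (h0 : Ck_on 4 (closed_interval x1 x2) u0)
  (h1 : Ck_on 3 (closed_interval x1 x2) u1) :
  exists delta : R,
    0 < delta /\
    delta <= Rpower (9 * (x2 - x1) ^ 2 / 16) (1 / 3) /\
    exists u : R -> R -> R, classical_solution x1 x2 delta u0 u1 u.
Proof.
  destruct (Ck_on_C2_extension 4 x1 x2 u0 ltac:(lia) hx h0) as (f & f1 & f2 & Hf & Ef).
  destruct (Ck_on_C2_extension 3 x1 x2 u1 ltac:(lia) hx h1) as (g & g1 & g2 & Hg & Eg).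
  pose proof RInt_m1_pos; pose proof RInt_m2_pos.
  set (c1 := / RInt m1 (-1) 1); set (c2 := / RInt m2 (-1) 1).
  exists (Rpower (9 * (x2 - x1) ^ 2 / 16) (1 / 3)).
  split; [apply exp_pos | split; [apply Rle_refl|]].
  exists (fun x y => c1 * wmean_tau f m1 x y + c2 * (y * wmean_tau g m2 x y)).
  eapply classical_solution_of_tricomi_C2.
  - apply tricomi_C2_lincomb; [apply (tricomi_C2_m1 f f1 f2 Hf) | apply (tricomi_C2_m2 g g1 g2 Hg)].
  - intros x Hx; cbv beta; unfold wmean_tau.
    rewrite tau_0, rt_0, !wmean_0 by auto using weight_continuous_m1, weight_continuous_m2.
    rewrite <- Ef, <- Eg by exact Hx; unfold c1, c2; split; field; lra.
Qed.
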